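(* The pairs $(R(x,y),L(x,t))$ and $(R'(x,y),L'(x,t))$ are both solutions of the Yang-Baxter equation, i.e. for $(\mathcal R,\mathcal L)$ either of these pairs, $$\mathcal L_{23}(x_2,t)\mathcal L_{13}(x_1,t)\mathcal R_{12}(x_1,x_2)=\mathcal R_{12}(x_1,x_2)\mathcal L_{13}(x_1,t)\mathcal L_{23}(x_2,t)$$ as endomorphisms of $V^{\otimes3}[x_1,x_2,t]$.
   Context: $V=\mathbb{C}^2$ with basis $v_0,v_1$. Endomorphisms of $V\otimes V$ are written as $4\times4$ matrices in the ordered basis $v_0\otimes v_0,v_0\otimes v_1,v_1\otimes v_0,v_1\otimes v_1$ (the $j$-th column is the image of the $j$-th basis vector): $R(x,y)=\begin{pmatrix}1&0&0&0\\0&x-y&1&0\\0&1&0&0\\0&0&0&1\end{pmatrix}$, $R'(x,y)=\begin{pmatrix}1&0&0&0\\0&0&1&0\\0&1&y-x&0\\0&0&0&1\end{pmatrix}$, $L(x,t)=\begin{pmatrix}1&0&0&0\\0&x+t&1&0\\0&1&0&0\\0&0&0&1\end{pmatrix}$, $L'(x,t)=\begin{pmatrix}x-t&0&0&0\\0&1&1&0\\0&1&1&0\\0&0&0&0\end{pmatrix}$. For an operator $Z$ on $V\otimes V$, $Z_{ij}$ denotes the operator on $V^{\otimes 3}$ acting as $Z$ on tensor factors $i$ and $j$ (with factor $i$ as the first factor) and as the identity on the remaining factor. *)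

From HB Require Import structures.
From mathcomp Require Import all_boot all_order all_algebra.
Set Implicit Arguments. Unset Strict Implicit. Unset Printing Implicit Defensive.
Import GRing.Theory.
Local Open Scope ring_scope.

(* Basis of V (x) V : index 2*a+b  <->  v_a (x) v_b  (order v0v0, v0v1, v1v0, v1v1).
   Basis of V^{(x)3} : index 4*a+2*b+c <-> v_a (x) v_b (x) v_c.
   Matrices act on column vectors: column j = image of j-th basis vector,
   so composition of operators is matrix product *m. *)

Section Defs.
Variable R : comRingType.

Definition mx4 (l : seq (seq R)) : 'M[R]_4 :=
  \matrix_(i < 4, j < 4) nth 0 (nth [::] l i) j.

Definition Rmx (x y : R) : 'M[R]_4 :=
  mx4 [:: [:: 1; 0; 0; 0]; [:: 0; x - y; 1; 0]; [:: 0; 1; 0; 0]; [:: 0; 0; 0; 1]].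
Definition R'mx (x y : R) : 'M[R]_4 :=
  mx4 [:: [:: 1; 0; 0; 0]; [:: 0; 0; 1; 0]; [:: 0; 1; y - x; 0]; [:: 0; 0; 0; 1]].
Definition Lmx (x t : R) : 'M[R]_4 :=
  mx4 [:: [:: 1; 0; 0; 0]; [:: 0; x + t; 1; 0]; [:: 0; 1; 0; 0]; [:: 0; 0; 0; 1]].
Definition L'mx (x t : R) : 'M[R]_4 :=
  mx4 [:: [:: x - t; 0; 0; 0]; [:: 0; 1; 1; 0]; [:: 0; 1; 1; 0]; [:: 0; 0; 0; 0]].

(* value (0 or 1) of the p-th tensor factor (p = 1, 2, 3) of basis index k of V^{(x)3} *)
Definition tbit (p : nat) (k : 'I_8) : nat := (k %/ 2 ^ (3 - p)) %% 2.

(* Z_{ij}: Z acting on tensor factors i and j (i first), identity on factor m *)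
Definition tens (i j : nat) (Z : 'M[R]_4) : 'M[R]_8 :=
  let m := (6 - i - j)%N in
  \matrix_(r < 8, c < 8)
    ((tbit m r == tbit m c)%:R *
     Z (inord (2 * tbit i r + tbit j r)) (inord (2 * tbit i c + tbit j c))).

Definition YBE (RR LL : R -> R -> 'M[R]_4) (x1 x2 t : R) : Prop :=
  tens 2 3 (LL x2 t) *m tens 1 3 (LL x1 t) *m tens 1 2 (RR x1 x2)
  = tens 1 2 (RR x1 x2) *m tens 1 3 (LL x1 t) *m tens 2 3 (LL x2 t).

End Defs.

From mathcomp Require Import all_boot all_order all_algebra ring.
Set Implicit Arguments.
Unset Strict Implicit.
Unset Printing Implicit Defensive.
Import GRing.Theory.
Local Open Scope ring_scope.

(* Both sides of each equation are explicit 8 x 8 matrices whose entries are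
   polynomials in x1, x2, t with integer coefficients, so the theorem is a
   finite list of polynomial identities.  To expose them, matrices are
   represented by their lists of rows: the legs Z_ij and the matrix product
   become list functions that reduce to closed expressions, and each of the
   64 entries is then closed by ring normalisation. *)

Section SeqMatrix.
Variable R : pzSemiRingType.

Definition seqmx n (A : seq (seq R)) : 'M[R]_n := \matrix_(i, j) nth 0 (nth [::] A i) j.

Definition seqmx_mul n (A B : seq (seq R)) : seq (seq R) :=
  mkseq (fun i => mkseq (fun j =>
    foldr (fun k s => nth 0 (nth [::] A i) k * nth 0 (nth [::] B k) j + s) 0 (iota 0 n)) n) n.

Lemma mul_seqmx n A B : seqmx n A *m seqmx n B = seqmx n (seqmx_mul n A B).
Proof.
apply/matrixP => i j; rewrite !mxE !nth_mkseq //.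
under eq_bigr do rewrite !mxE.
rewrite -(big_mkord xpredT (fun k => nth 0 (nth [::] A i) k * nth 0 (nth [::] B k) j)).
by rewrite /index_iota subn0; elim: (iota 0 n) => [|k s IHs]; rewrite ?big_nil ?big_cons //= IHs.
Qed.

End SeqMatrix.

Section TensorEmbedding.
Variable R : comNzRingType.

Definition tbitn (p k : nat) : nat := odd (iter (3 - p) half k).

Lemma tbitE p (k : 'I_8) : tbit p k = tbitn p k.
Proof.
rewrite /tbit /tbitn -modn2; congr (_ %% 2)%N.
by elim: (3 - p)%N => [|e IHe]; rewrite ?divn1 // expnSr divnMA IHe divn2.
Qed.

Lemma tbit_pair_lt i j (k : 'I_8) : (2 * tbit i k + tbit j k < 4)%N.
Proof. by rewrite !tbitE /tbitn; case: odd; case: odd. Qed.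

Definition tens_seq (i j : nat) (A : seq (seq R)) : seq (seq R) :=
  let m := (6 - i - j)%N in
  mkseq (fun r => mkseq (fun c =>
    if eqn (tbitn m r) (tbitn m c) then
      nth 0 (nth [::] A (2 * tbitn i r + tbitn j r)) (2 * tbitn i c + tbitn j c)
    else 0) 8) 8.

Lemma tens_seqmx i j A : tens i j (mx4 A) = seqmx 8 (tens_seq i j A).
Proof.
apply/matrixP => r c; rewrite !mxE !nth_mkseq // !inordK ?tbit_pair_lt // -!tbitE eqnE.
by case: eqP; rewrite ?mul1r ?mul0r.
Qed.

End TensorEmbedding.

Ltac seq_ring := lazymatch goal with
  | |- _ :: _ = _ :: _ => refine (f_equal2 cons _ _); [seq_ring | seq_ring]
  | |- [::] = [::] => reflexivity
  | _ => ring
  end.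

Theorem proposition1p13 (R : comRingType) (x1 x2 t : R) :
  YBE (@Rmx R) (@Lmx R) x1 x2 t /\ YBE (@R'mx R) (@L'mx R) x1 x2 t.
Proof.
split; rewrite /YBE !tens_seqmx !mul_seqmx; congr seqmx.
(* A whitelist, so that the ring operations and the carrier of R stay folded. *)
all: cbv beta iota zeta delta [seqmx_mul tens_seq mkseq map iota nth foldr tbitn iter half odd
  eqn subn addn muln Nat.add Nat.sub Nat.mul nat_of_bool negb].
all: seq_ring.
Qed.
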